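(* Let $n,m\ge0$ be integers. There exists a nonempty finite multiset $S$ of pairs $(i,j)$ with $0\le i\le n$ and $0\le j\le m$ such that: (1) for each $d\in\{0,1,\dots,n+m\}$ the number of elements of $S$ with $i+j=d$ equals $|S|/(n+m+1)$; (2) for each $i\in\{0,\dots,n\}$ the number of elements of $S$ with first coordinate $i$ equals $|S|/(n+1)$; (3) for each $j\in\{0,\dots,m\}$ the number of elements of $S$ with second coordinate $j$ equals $|S|/(m+1)$.
   Context: Here $S$ is a multiset: pairs may be repeated, and counts include multiplicities. (Equivalently, $S$ is a multiset of quadratic monomials $x_iy_j$ in weighted variables with $\deg x_i=i$, $\deg y_j=j$ in which every degree in $[0,n+m]$, every $x_i$, and every $y_j$ occurs equally often.) *)

From mathcomp Require Import all_boot.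
Set Implicit Arguments. Unset Strict Implicit. Unset Printing Implicit Defensive.
(* A finite multiset of pairs (i,j) is represented by a sequence
   S : seq (nat * nat); multiplicities are counted with [count]. *)

From mathcomp Require Import all_boot.
From mathcomp Require Import zify.

(* The multiset S is the multiset of all points visited by all monotone
   lattice paths from (0,0) to (n,m), counted with multiplicity.  Every such
   path visits exactly one point on each anti-diagonal i + j = d, so each
   anti-diagonal is hit C(n+m,n) times.  For the column and row counts we use
   the recursive description of this multiset: the C(n+m,n) paths all start
   at (0,0) and then continue as paths to (n,m) issued from (1,0) or (0,1),
     S(n,m) = C(n+m,n) * {(0,0)} + shift1 S(n-1,m) + shift2 S(n,m-1). *)

Lemma bin_addC (a b : nat) : 'C(a + b, a) = 'C(a + b, b).
Proof. by rewrite -[RHS]bin_sub ?leq_addl // addnK. Qed.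

Lemma count_pred1_iota {j k : nat} :
  j <= k -> count (pred1 j) (iota 0 k.+1) = 1.
Proof. by move=> le_jk; rewrite count_uniq_mem ?iota_uniq // mem_iota ltnS le_jk. Qed.

Definition shift1 (p : nat * nat) : nat * nat := (p.1.+1, p.2).
Definition shift2 (p : nat * nat) : nat * nat := (p.1, p.2.+1).
Definition swap_pt (p : nat * nat) : nat * nat := (p.2, p.1).

Fixpoint path_points (n m : nat) {struct n} : seq (nat * nat) :=
  if n is n'.+1 then
    (fix path_points_n (m : nat) :=
       if m is m'.+1 then
         nseq 'C(n + m, n) (0, 0)
           ++ map shift1 (path_points n' m) ++ map shift2 (path_points_n m')
       else [seq (i, 0) | i <- iota 0 n.+1]) m
  else [seq (0, j) | j <- iota 0 m.+1].

Lemma path_points0m (m : nat) : path_points 0 m = [seq (0, j) | j <- iota 0 m.+1].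
Proof. by []. Qed.

Lemma path_pointsn0 (n : nat) : path_points n 0 = [seq (i, 0) | i <- iota 0 n.+1].
Proof. by case: n. Qed.

Lemma path_pointsSS (n m : nat) :
  path_points n.+1 m.+1 =
    nseq 'C(n.+1 + m.+1, n.+1) (0, 0)
      ++ map shift1 (path_points n m.+1) ++ map shift2 (path_points n.+1 m).
Proof. by []. Qed.

Lemma path_points_ind (Q : nat -> nat -> Prop) :
  (forall m, Q 0 m) -> (forall n, Q n 0) ->
  (forall n m, Q n m.+1 -> Q n.+1 m -> Q n.+1 m.+1) ->
  forall n m, Q n m.
Proof.
move=> Q0m Qn0 QSS; elim=> [//|n IHn]; elim=> [//|m IHm].
exact: QSS (IHn m.+1) IHm.
Qed.

Lemma count_path_pointsSS (P : pred (nat * nat)) (n m : nat) :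
  count P (path_points n.+1 m.+1) =
    P (0, 0) * 'C(n.+1 + m.+1, n.+1)
      + count (preim shift1 P) (path_points n m.+1)
      + count (preim shift2 P) (path_points n.+1 m).
Proof. by rewrite path_pointsSS !count_cat count_nseq !count_map mulnC addnA. Qed.

Lemma path_points_swap (n m : nat) :
  perm_eq (map swap_pt (path_points n m)) (path_points m n).
Proof.
move: n m; apply: path_points_ind => [m|n|n m IH1 IH2].
- by rewrite path_points0m path_pointsn0 -map_comp.
- by rewrite path_points0m path_pointsn0 -map_comp.
rewrite !path_pointsSS !map_cat map_nseq addnC bin_addC perm_cat2l.
rewrite perm_catC -!map_comp.
have -> : swap_pt \o shift1 = shift2 \o swap_pt by [].
have -> : swap_pt \o shift2 = shift1 \o swap_pt by [].
by rewrite !map_comp perm_cat ?perm_map.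
Qed.

Lemma path_points_box (n m : nat) :
  all (fun p => (p.1 <= n) && (p.2 <= m)) (path_points n m).
Proof.
move: n m; apply: path_points_ind => [m|n|n m IH1 IH2].
- rewrite path_points0m all_map; apply/allP => j; rewrite mem_iota /=; lia.
- rewrite path_pointsn0 all_map; apply/allP => i; rewrite mem_iota /=; lia.
rewrite path_pointsSS !all_cat all_nseq !all_map /=.
apply/and3P; split.
- by rewrite orbT.
- by apply: sub_all IH1 => p /=; lia.
- by apply: sub_all IH2 => p /=; lia.
Qed.

Lemma size_path_points (n m : nat) :
  size (path_points n m) = (n + m).+1 * 'C(n + m, n).
Proof.
move: n m; apply: path_points_ind => [m|n|n m IH1 IH2].
- by rewrite path_points0m size_map size_iota bin0 muln1.
- by rewrite path_pointsn0 size_map size_iota addn0 binn muln1.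
rewrite -!count_predT count_path_pointsSS !count_predT IH1 IH2 mul1n.
rewrite !addSn !addnS binS; lia.
Qed.

(* Each anti-diagonal i + j = d is visited C(n+m,n) times: once per path. *)
Lemma count_path_points_diag (n m d : nat) :
  d <= n + m ->
  count (fun p => p.1 + p.2 == d) (path_points n m) = 'C(n + m, n).
Proof.
move: n m d; apply: path_points_ind => [m|n|n m IH1 IH2] d le_d.
- rewrite path_points0m count_map bin0 -(count_pred1_iota le_d).
  exact: eq_count.
- rewrite addn0 in le_d.
  rewrite path_pointsn0 count_map addn0 binn -(count_pred1_iota le_d).
  by apply: eq_count => i /=; rewrite addn0.
rewrite count_path_pointsSS.
case: d le_d => [|d] le_d.
- rewrite !(@eq_count _ _ pred0) ?count_pred0 ?addn0 ?mul1n // => p /=.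
  by rewrite addnS.
rewrite mul0n add0n (@eq_count _ _ (fun p => p.1 + p.2 == d)) //.
rewrite (@eq_count _ (preim shift2 _) (fun p => p.1 + p.2 == d)); last first.
  by move=> p /=; rewrite addnS.
rewrite IH1 ?IH2; try lia.
by rewrite !addSn !addnS [in RHS]binS addnC.
Qed.

Lemma count_path_points_col (n m i : nat) :
  i <= n ->
  count (fun p => p.1 == i) (path_points n m) = 'C((n + m).+1, n.+1).
Proof.
move: n m i; apply: path_points_ind => [m|n|n m IH1 IH2] i le_i.
- move: le_i; rewrite leqn0 => /eqP ->.
  rewrite path_points0m count_map add0n bin1 -[RHS](size_iota 0) -count_predT.
  exact: eq_count.
- rewrite path_pointsn0 count_map addn0 binn -(count_pred1_iota le_i).
  exact: eq_count.
rewrite count_path_pointsSS (@eq_count _ (preim shift2 _) (fun p => p.1 == i)) //.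
rewrite IH2 //.
case: i le_i => [|i] le_i.
- rewrite (@eq_count _ _ pred0) ?count_pred0 ?addn0 ?mul1n //.
  by rewrite !addSn !addnS [in RHS]binS addnC.
rewrite mul0n add0n (@eq_count _ _ (fun p => p.1 == i)) // IH1 //.
by rewrite !addSn !addnS [in RHS]binS addnC.
Qed.

Lemma count_path_points_row (n m j : nat) :
  j <= m ->
  count (fun p => p.2 == j) (path_points n m) = 'C((n + m).+1, m.+1).
Proof.
move=> le_j; rewrite -(permP (path_points_swap m n)) count_map.
by rewrite (@eq_count _ _ (fun p => p.1 == j)) // count_path_points_col // addnC.
Qed.

Theorem lemma6p6 (n m : nat) :
  exists S : seq (nat * nat),
    [/\ 0 < size S,
        all (fun p => (p.1 <= n) && (p.2 <= m)) S,
        (forall d, d <= n + m ->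
           count (fun p => p.1 + p.2 == d) S * (n + m + 1) = size S),
        (forall i, i <= n ->
           count (fun p => p.1 == i) S * (n + 1) = size S) &
        (forall j, j <= m ->
           count (fun p => p.2 == j) S * (m + 1) = size S)].
Proof.
exists (path_points n m); rewrite size_path_points !addn1; split.
- by rewrite muln_gt0 bin_gt0 leq_addr.
- exact: path_points_box.
- by move=> d le_d; rewrite count_path_points_diag // mulnC.
- (* (n+1) C(n+m+1, n+1) = (n+m+1) C(n+m, n) *)
  by move=> i le_i; rewrite count_path_points_col // mulnC -mul_bin_diag.
- by move=> j le_j; rewrite count_path_points_row // mulnC -mul_bin_diag bin_addC.
Qed.
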